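(* Fix $A\in\mathbb R$. There exist constants $C=C(A)$ and $K=K(A)$ such that for all sufficiently small $\epsilon>0$, every $t>0$ and all $x,y\in\mathbb Z_{\ge0}$, $$\mathbf p_t^R(x,y)\le C\,(t^{-1/2}+\epsilon)\,e^{K\epsilon^2t}.$$
   Context: Let $p_t(x)$, $x\in\mathbb Z$, denote the whole-line semi-discrete heat kernel, i.e. the solution of $\partial_tp_t(x)=\frac12\Delta p_t(x)$, $p_0(x)=1_{\{x=0\}}$, where $\Delta f(x)=f(x+1)+f(x-1)-2f(x)$. For $\epsilon>0$ let $\mu_A=1-A\epsilon$. The half-line Robin heat kernel is, for $t\ge0$ and $x,y\in\mathbb Z_{\ge0}$, $$\mathbf p_t^R(x,y)=p_t(x-y)+\mu_Ap_t(x+y+1)+(1-\mu_A^{-2})\sum_{z=2}^\infty p_t(x+y+z)\mu_A^z.$$ *)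

From Stdlib Require Import Reals ZArith ClassicalEpsilon.
Open Scope R_scope.

(* Value of a convergent real series sum_{n>=0} u n (chosen via classical
   epsilon; equals the true sum whenever the series converges). *)
Definition series_val (u : nat -> R) : R :=
  epsilon (inhabits 0) (fun l => infinite_sum u l).

(* Whole-line semi-discrete heat kernel, solution of
   d/dt p_t(x) = 1/2 (p_t(x+1)+p_t(x-1)-2p_t(x)), p_0 = 1_{x=0}:
   p_t(x) = e^{-t} I_{|x|}(t) = sum_k e^{-t} (t/2)^{2k+|x|} / (k! (k+|x|)!). *)
Definition heat_term (t : R) (x : Z) (k : nat) : R :=
  exp (- t) * (t / 2) ^ (2 * k + Z.abs_nat x)
  / (INR (fact k) * INR (fact (k + Z.abs_nat x))).

Definition heat_kernel (t : R) (x : Z) : R := series_val (heat_term t x).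

Definition muA (A eps : R) : R := 1 - A * eps.

Definition robin_kernel (A eps t : R) (x y : nat) : R :=
  let mu := muA A eps in
  heat_kernel t (Z.of_nat x - Z.of_nat y)
  + mu * heat_kernel t (Z.of_nat x + Z.of_nat y + 1)
  + (1 - / mu ^ 2) *
    series_val (fun n => heat_kernel t (Z.of_nat x + Z.of_nat y + Z.of_nat (n + 2))
                          * mu ^ (n + 2)).

From Stdlib Require Import Reals ZArith Lra Lia Psatz ClassicalEpsilon.
Open Scope R_scope.

(* Write [P_s(n) = e^(-s) s^n / n!] for the Poisson weights.  The heat kernel is
   [p_t(z) = sum_k P_(t/2)(k) P_(t/2)(k + |z|)], so it is bounded by the largest
   Poisson weight, which is [O(s^(-1/2))]: the [~ sqrt s / 2] weights next to any
   [P_s(k)] on the side of [s] are all at least [3/4 P_s(k)], and all weights sum to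
   at most 1.  This bounds the first two terms of [p^R_t].  In the third,
   [1 - mu^(-2) = O(A eps)], and the series is dominated by the one-sided generating
   function [sum_(w >= 0) p_t(w) nu^w <= exp (t/2 (nu + 1/nu - 2))] with
   [nu = max 1 mu], which is at most [exp (A^2 eps^2 t / 2)]. *)

Lemma series_val_eq (u : nat -> R) (l : R) : infinite_sum u l -> series_val u = l.
Proof.
  intro Hl; unfold series_val.
  apply (uniqueness_sum u); [apply epsilon_spec; exists l |]; exact Hl.
Qed.

Lemma Un_cv_const (c : R) : Un_cv (fun _ => c) c.
Proof. intros e He; exists 0%nat; intros; unfold Rdist; rewrite Rminus_diag, Rabs_R0; lra. Qed.

Lemma infinite_sum_nonneg_bounded (u : nat -> R) (E : R) :
  (forall n, 0 <= u n) -> (forall N, sum_f_R0 u N <= E) ->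
  exists l, infinite_sum u l /\ 0 <= l <= E.
Proof.
  intros Hu HE.
  assert (Hgrow : Un_growing (sum_f_R0 u)) by (intro n; simpl; specialize (Hu (S n)); lra).
  destruct (growing_cv _ Hgrow) as [l Hl]; [exists E; intros x [n ->]; apply HE |].
  exists l; repeat split; [exact Hl | |].
  - apply Rle_trans with (sum_f_R0 u 0); [apply Hu | apply growing_ineq; assumption].
  - exact (@Rle_cv_lim (sum_f_R0 u) (fun _ => E) l E HE Hl (Un_cv_const E)).
Qed.

Lemma sum_f_R0_shift_le (f : nat -> R) (b N : nat) : (forall n, 0 <= f n) ->
  sum_f_R0 (fun i => f (b + i)%nat) N <= sum_f_R0 f (b + N).
Proof.
  intro Hf; induction N as [|N IH].
  - simpl; rewrite Nat.add_0_r; destruct b as [|b]; simpl.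
    + lra.
    + pose proof (cond_pos_sum f b Hf); lra.
  - replace (b + S N)%nat with (S (b + N)) by lia; simpl.
    replace (S (b + N)) with (b + S N)%nat by lia; lra.
Qed.

Lemma sum_f_R0_swap (f : nat -> nat -> R) (W K : nat) :
  sum_f_R0 (fun w => sum_f_R0 (f w) K) W = sum_f_R0 (fun k => sum_f_R0 (fun w => f w k) W) K.
Proof.
  induction W as [|W IH]; [reflexivity |].
  cbn [sum_f_R0]; rewrite IH, plus_sum; reflexivity.
Qed.

Lemma exp_le_compat (x y : R) : x <= y -> exp x <= exp y.
Proof. intros [Hxy | ->]; [left; apply exp_increasing |]; lra. Qed.

Lemma pow_le_pow_le1 (r : R) (m n : nat) : 0 <= r <= 1 -> (m <= n)%nat -> r ^ n <= r ^ m.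
Proof.
  intros Hr Hmn; replace n with (m + (n - m))%nat by lia; rewrite pow_add.
  assert (0 <= r ^ m) by (apply pow_le; lra).
  assert (r ^ (n - m) <= 1) by (rewrite <- (pow1 (n - m)); apply pow_incr; lra).
  nra.
Qed.

Lemma pow_one_sub_ge (a : R) (n : nat) : 0 <= a <= 1 -> 1 - INR n * a <= (1 - a) ^ n.
Proof.
  intro Ha; induction n as [|n IH]; [simpl; lra |].
  rewrite S_INR; simpl pow; assert (0 <= INR n) by apply pos_INR.
  assert (0 <= (1 - a) ^ n) by (apply pow_le; lra); nra.
Qed.

Lemma nat_floor (x : R) : 0 <= x -> exists n : nat, INR n <= x < INR n + 1.
Proof.
  intro Hx; destruct (base_Int_part x) as [Hlo Hhi].
  assert (Hpos : (0 <= Int_part x)%Z) by (enough (-1 < Int_part x)%Z by lia; apply lt_IZR; lra).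
  exists (Z.to_nat (Int_part x)); rewrite INR_IZR_INZ, Z2Nat.id by exact Hpos; lra.
Qed.

Lemma geometric_growth_ge (g : nat -> R) (r : R) (L : nat) : 0 <= r ->
  (forall i, (i < L)%nat -> r * g i <= g (S i)) ->
  forall i, (i <= L)%nat -> r ^ i * g O <= g i.
Proof.
  intros Hr Hg i; induction i as [|i IH]; intro Hi; simpl; [lra |].
  specialize (IH ltac:(lia)); specialize (Hg i ltac:(lia)).
  assert (r * (r ^ i * g O) <= r * g i) by (apply Rmult_le_compat_l; assumption); lra.
Qed.

Definition exp_term (s : R) (n : nat) : R := s ^ n / INR (fact n).

Lemma exp_term_nonneg (s : R) (n : nat) : 0 <= s -> 0 <= exp_term s n.
Proof.
  intro Hs; apply Rmult_le_pos; [apply pow_le; assumption |].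
  left; apply Rinv_0_lt_compat, INR_fact_lt_0.
Qed.

Lemma exp_term_succ (s : R) (n : nat) : exp_term s (S n) * INR (S n) = exp_term s n * s.
Proof.
  unfold exp_term; rewrite fact_simpl, mult_INR; simpl pow.
  field; split; [apply INR_fact_neq_0 | apply not_0_INR; lia].
Qed.

Lemma sum_exp_term_le_exp (s : R) (N : nat) : 0 <= s -> sum_f_R0 (exp_term s) N <= exp s.
Proof.
  intro Hs.
  assert (Hcv : exp_in s (exp s)) by (unfold exp; apply proj2_sig).
  replace (sum_f_R0 (exp_term s) N) with (sum_f_R0 (fun i => / INR (fact i) * s ^ i) N)
    by (apply sum_eq; intros; unfold exp_term, Rdiv; ring).
  apply sum_incr; [exact Hcv |]; intro n.
  apply Rmult_le_pos; [left; apply Rinv_0_lt_compat, INR_fact_lt_0 | apply pow_le; assumption].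
Qed.

Lemma exp_term_succ_ge (s r : R) (n : nat) : 0 <= r -> r * INR (S n) <= s ->
  r * exp_term s n <= exp_term s (S n).
Proof.
  intros Hr Hrn.
  assert (Hn : 0 < INR (S n)) by (apply lt_0_INR; lia).
  assert (0 <= exp_term s n) by (apply exp_term_nonneg; nra).
  apply Rmult_le_reg_r with (INR (S n)); [exact Hn |].
  rewrite exp_term_succ; nra.
Qed.

Lemma exp_term_pred_ge (s r : R) (n : nat) : 0 < s -> r * s <= INR (S n) ->
  r * exp_term s (S n) <= exp_term s n.
Proof.
  intros Hs Hrn.
  assert (0 <= exp_term s (S n)) by (apply exp_term_nonneg; lra).
  apply Rmult_le_reg_r with s; [exact Hs |].
  rewrite <- exp_term_succ; nra.
Qed.

(* Starting from any index [k] and moving [L] steps towards [s], each step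
   loses at most a factor [r = 1 - L/s]. *)
Section ExpTermWindow.

Variables (s : R) (k L : nat).
Hypotheses (Hs : 0 < s) (HL : INR L <= s).

Let r := 1 - INR L / s.

Lemma window_ratio_bounds : 0 <= r <= 1.
Proof.
  assert (0 <= INR L) by apply pos_INR.
  assert (INR L / s <= 1) by (apply Rmult_le_reg_r with s; [lra |]; field_simplify; lra).
  assert (0 <= INR L / s) by (apply Rmult_le_pos; [lra | left; apply Rinv_0_lt_compat, Hs]).
  unfold r; lra.
Qed.

Lemma exp_term_window_above : INR k <= s ->
  forall i, (i <= L)%nat -> r ^ L * exp_term s k <= exp_term s (k + i).
Proof.
  intros Hk i Hi.
  pose proof window_ratio_bounds as Hr.
  assert (Hstep : forall j, (j < L)%nat ->
            r * exp_term s (k + j) <= exp_term s (k + S j)).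
  { intros j Hj; rewrite Nat.add_succ_r; apply exp_term_succ_ge; [lra |].
    assert (INR (S (k + j)) <= s + INR L)
      by (rewrite <- Nat.add_succ_r, plus_INR; apply le_INR in Hj; lra).
    assert (r * (s + INR L) = s - INR L * INR L / s) by (unfold r; field; lra).
    assert (0 <= INR L * INR L / s)
      by (apply Rmult_le_pos; [nra | left; apply Rinv_0_lt_compat, Hs]).
    apply Rle_trans with (r * (s + INR L)); [apply Rmult_le_compat_l |]; lra. }
  pose proof (geometric_growth_ge (fun j => exp_term s (k + j)) r L (proj1 Hr) Hstep i Hi)
    as Hgeo; cbn beta in Hgeo; rewrite Nat.add_0_r in Hgeo.
  eapply Rle_trans; [| exact Hgeo].
  apply Rmult_le_compat_r; [apply exp_term_nonneg; lra | apply pow_le_pow_le1; assumption].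
Qed.

Lemma exp_term_window_below : s < INR k ->
  forall i, (i <= L)%nat -> r ^ L * exp_term s k <= exp_term s (k - L + i).
Proof.
  intros Hk i Hi.
  pose proof window_ratio_bounds as Hr.
  assert (HLk : (L <= k)%nat) by (apply INR_le; lra).
  assert (Hstep : forall j, (j < L)%nat ->
            r * exp_term s (k - j) <= exp_term s (k - S j)).
  { intros j Hj; replace (k - j)%nat with (S (k - S j)) by lia.
    apply exp_term_pred_ge; [exact Hs |].
    replace (S (k - S j)) with (k - j)%nat by lia.
    rewrite minus_INR by lia; apply lt_INR in Hj.
    replace (r * s) with (s - INR L) by (unfold r; field; lra); lra. }
  pose proof (geometric_growth_ge (fun j => exp_term s (k - j)) r L (proj1 Hr) Hstep (L - i)
                ltac:(lia)) as Hgeo; cbn beta in Hgeo.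
  rewrite Nat.sub_0_r in Hgeo; replace (k - (L - i))%nat with (k - L + i)%nat in Hgeo by lia.
  eapply Rle_trans; [| exact Hgeo].
  apply Rmult_le_compat_r; [apply exp_term_nonneg; lra | apply pow_le_pow_le1; [assumption | lia]].
Qed.

Lemma exp_term_window_sum_le : (INR L + 1) * (r ^ L * exp_term s k) <= exp s.
Proof.
  set (c := r ^ L * exp_term s k).
  assert (Hwin : exists b, forall i, (i <= L)%nat -> c <= exp_term s (b + i)).
  { destruct (Rle_or_lt (INR k) s) as [Hk | Hk].
    - exists k; exact (exp_term_window_above Hk).
    - exists (k - L)%nat; exact (exp_term_window_below Hk). }
  destruct Hwin as [b Hb].
  replace ((INR L + 1) * c) with (sum_f_R0 (fun _ => c) L) by (rewrite sum_cte, S_INR; ring).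
  apply Rle_trans with (sum_f_R0 (fun i => exp_term s (b + i)) L); [apply sum_Rle; auto |].
  apply Rle_trans with (sum_f_R0 (exp_term s) (b + L)).
  - apply sum_f_R0_shift_le; intro; apply exp_term_nonneg; lra.
  - apply sum_exp_term_le_exp; lra.
Qed.

End ExpTermWindow.

Definition poisson (s : R) (n : nat) : R := exp (- s) * exp_term s n.

Lemma poisson_nonneg (s : R) (n : nat) : 0 <= s -> 0 <= poisson s n.
Proof. intro Hs; apply Rmult_le_pos; [left; apply exp_pos | apply exp_term_nonneg, Hs]. Qed.

Lemma exp_neg_mul_exp (s : R) : exp (- s) * exp s = 1.
Proof. rewrite <- exp_plus, Rplus_opp_l; apply exp_0. Qed.

Lemma sum_poisson_le_1 (s : R) (N : nat) : 0 <= s -> sum_f_R0 (poisson s) N <= 1.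
Proof.
  intro Hs.
  replace (sum_f_R0 (poisson s) N) with (exp (- s) * sum_f_R0 (exp_term s) N)
    by (rewrite scal_sum; apply sum_eq; intros; unfold poisson; ring).
  rewrite <- (exp_neg_mul_exp s).
  apply Rmult_le_compat_l; [left; apply exp_pos | apply sum_exp_term_le_exp, Hs].
Qed.

Lemma poisson_le_1 (s : R) (n : nat) : 0 <= s -> poisson s n <= 1.
Proof.
  intro Hs.
  pose proof (sum_f_R0_shift_le (poisson s) n 0 (fun m => poisson_nonneg s m Hs)) as Hn.
  pose proof (sum_poisson_le_1 s (n + 0) Hs).
  simpl in Hn; rewrite Nat.add_0_r in *; lra.
Qed.

(* Take [L = floor (sqrt s / 2)]: then [r ^ L >= 1 - L^2/s >= 3/4], so the window
   lemma gives [(sqrt s / 2) * (3/4) * poisson s k <= 1]. *)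
Lemma poisson_le_inv_sqrt (s : R) (k : nat) : 0 < s -> poisson s k <= 3 / sqrt s.
Proof.
  intro Hs.
  assert (Hsq : sqrt s * sqrt s = s) by (apply sqrt_sqrt; lra).
  assert (Hsq0 : 0 < sqrt s) by (apply sqrt_lt_R0, Hs).
  assert (Hk : 0 <= poisson s k) by (apply poisson_nonneg; lra).
  apply Rmult_le_reg_r with (sqrt s); [exact Hsq0 |].
  replace (3 / sqrt s * sqrt s) with 3 by (field; lra).
  destruct (Rlt_or_le s 1) as [Hs1 | Hs1].
  - assert (sqrt s <= 1) by (rewrite <- sqrt_1; apply sqrt_le_1_alt; lra).
    pose proof (poisson_le_1 s k ltac:(lra)); nra.
  - assert (1 <= sqrt s) by (rewrite <- sqrt_1; apply sqrt_le_1_alt; lra).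
    destruct (nat_floor (sqrt s / 2)) as [L [HL1 HL2]]; [lra |].
    assert (0 <= INR L) by apply pos_INR.
    assert (HLs : INR L <= s) by nra.
    assert (HLL : INR L * (INR L / s) <= 1/4)
      by (apply Rmult_le_reg_r with s; [lra |]; field_simplify; nra).
    assert (HrL : 3/4 <= (1 - INR L / s) ^ L).
    { eapply Rle_trans; [| apply pow_one_sub_ge]; [lra |].
      pose proof (window_ratio_bounds s L Hs HLs); lra. }
    pose proof (exp_term_window_sum_le s k L Hs HLs) as Hwin.
    assert (Hq : 0 <= exp_term s k) by (apply exp_term_nonneg; lra).
    assert (3/4 * exp_term s k <= (1 - INR L / s) ^ L * exp_term s k)
      by (apply Rmult_le_compat_r; lra).
    assert (Hwin' : sqrt s / 2 * (3/4 * exp_term s k) <= exp s) by nra.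
    assert (exp (- s) * (sqrt s / 2 * (3/4 * exp_term s k)) <= 1)
      by (rewrite <- (exp_neg_mul_exp s);
          apply Rmult_le_compat_l; [left; apply exp_pos | exact Hwin']).
    unfold poisson in *; nra.
Qed.

Lemma heat_term_poisson (t : R) (z : Z) (k : nat) :
  heat_term t z k = poisson (t / 2) k * poisson (t / 2) (k + Z.abs_nat z).
Proof.
  unfold heat_term, poisson, exp_term.
  replace (2 * k + Z.abs_nat z)%nat with (k + (k + Z.abs_nat z))%nat by lia.
  rewrite pow_add.
  replace (exp (- t)) with (exp (- (t / 2)) * exp (- (t / 2)))
    by (rewrite <- exp_plus; f_equal; field).
  field; split; apply INR_fact_neq_0.
Qed.

Lemma heat_kernel_spec (t : R) (z : Z) : 0 < t ->
  infinite_sum (heat_term t z) (heat_kernel t z) /\ 0 <= heat_kernel t z <= 5 / sqrt t.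
Proof.
  intro Ht.
  set (B := 3 / sqrt (t / 2)).
  assert (HP : forall n, 0 <= poisson (t / 2) n) by (intro; apply poisson_nonneg; lra).
  assert (HB : forall n, poisson (t / 2) n <= B) by (intro; apply poisson_le_inv_sqrt; lra).
  assert (HB5 : B <= 5 / sqrt t).
  { assert (Ha : sqrt (t / 2) * sqrt (t / 2) = t / 2) by (apply sqrt_sqrt; lra).
    assert (Hb : sqrt t * sqrt t = t) by (apply sqrt_sqrt; lra).
    assert (0 < sqrt (t / 2)) by (apply sqrt_lt_R0; lra).
    assert (0 < sqrt t) by (apply sqrt_lt_R0; lra).
    assert (3 * sqrt t <= 5 * sqrt (t / 2)) by nra.
    apply Rmult_le_reg_r with (sqrt t * sqrt (t / 2)); [nra |].
    unfold B; field_simplify; lra. }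
  destruct (infinite_sum_nonneg_bounded (heat_term t z) B) as [l [Hl Hl0]].
  - intro k; rewrite heat_term_poisson; apply Rmult_le_pos; apply HP.
  - intro N; apply Rle_trans with (sum_f_R0 (fun k => poisson (t / 2) k * B) N).
    + apply sum_Rle; intros k _; rewrite heat_term_poisson; apply Rmult_le_compat_l; auto.
    + rewrite <- scal_sum.
      pose proof (sum_poisson_le_1 (t / 2) N ltac:(lra)).
      pose proof (Rle_trans _ _ _ (HP 0%nat) (HB 0%nat)); nra.
  - unfold heat_kernel; rewrite (series_val_eq _ _ Hl); split; [exact Hl | lra].
Qed.

(* Splitting [nu ^ w] as [nu ^ (-k) * nu ^ (k + w)] between the two Poisson factors. *)
Lemma heat_term_mul_pow (t nu : R) (w k : nat) : 0 < nu ->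
  heat_term t (Z.of_nat w) k * nu ^ w =
  exp (- t) * (exp_term (t / 2 / nu) k * exp_term (t / 2 * nu) (k + w)).
Proof.
  intro Hnu; unfold heat_term, exp_term; rewrite Zabs2Nat.id.
  replace (2 * k + w)%nat with (k + (k + w))%nat by lia.
  unfold Rdiv; rewrite !Rpow_mult_distr, !pow_add, !pow_inv.
  assert (0 < nu ^ k) by (apply pow_lt, Hnu).
  field; repeat split; try apply INR_fact_neq_0; try (apply pow_nonzero); lra.
Qed.

Lemma sum_heat_term_mul_pow_le (t nu : R) (K W : nat) : 0 < t -> 0 < nu ->
  sum_f_R0 (fun w => sum_f_R0 (heat_term t (Z.of_nat w)) K * nu ^ w) W
  <= exp (t / 2 * (nu + / nu - 2)).
Proof.
  intros Ht Hnu.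
  set (a := exp_term (t / 2 / nu)); set (b := exp_term (t / 2 * nu)).
  assert (Ha : forall k, 0 <= a k)
    by (intro; apply exp_term_nonneg, Rmult_le_pos; [| left; apply Rinv_0_lt_compat]; lra).
  assert (Hb : forall k, 0 <= b k) by (intro; apply exp_term_nonneg; nra).
  replace (exp (t / 2 * (nu + / nu - 2))) with (exp (- t) * exp (t / 2 / nu) * exp (t / 2 * nu))
    by (rewrite <- !exp_plus; f_equal; field; lra).
  transitivity (sum_f_R0 (fun k => sum_f_R0 (fun w => exp (- t) * (a k * b (k + w)%nat)) W) K).
  { right; rewrite <- sum_f_R0_swap; apply sum_eq; intros w _.
    rewrite Rmult_comm, scal_sum; apply sum_eq; intros k _.
    apply heat_term_mul_pow, Hnu. }
  transitivity (sum_f_R0 (fun k => a k * (exp (- t) * exp (t / 2 * nu))) K).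
  { apply sum_Rle; intros k _.
    replace (sum_f_R0 (fun w => exp (- t) * (a k * b (k + w)%nat)) W)
      with (exp (- t) * a k * sum_f_R0 (fun w => b (k + w)%nat) W)
      by (rewrite scal_sum; apply sum_eq; intros; ring).
    replace (a k * (exp (- t) * exp (t / 2 * nu)))
      with (exp (- t) * a k * exp (t / 2 * nu)) by ring.
    apply Rmult_le_compat_l; [apply Rmult_le_pos; [left; apply exp_pos | apply Ha] |].
    eapply Rle_trans; [apply sum_f_R0_shift_le, Hb | apply sum_exp_term_le_exp; nra]. }
  rewrite <- scal_sum.
  replace (exp (- t) * exp (t / 2 / nu) * exp (t / 2 * nu))
    with (exp (- t) * exp (t / 2 * nu) * exp (t / 2 / nu)) by ring.
  apply Rmult_le_compat_l; [left; apply Rmult_lt_0_compat; apply exp_pos |].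
  apply sum_exp_term_le_exp, Rmult_le_pos; [| left; apply Rinv_0_lt_compat]; lra.
Qed.

Lemma sum_heat_kernel_mul_pow_le (t nu : R) (W : nat) : 0 < t -> 0 < nu ->
  sum_f_R0 (fun w => heat_kernel t (Z.of_nat w) * nu ^ w) W <= exp (t / 2 * (nu + / nu - 2)).
Proof.
  intros Ht Hnu.
  assert (Hterm : forall w, Un_cv (fun K => sum_f_R0 (heat_term t (Z.of_nat w)) K * nu ^ w)
                                 (heat_kernel t (Z.of_nat w) * nu ^ w))
    by (intro w; apply CV_mult; [apply (heat_kernel_spec t _ Ht) | apply Un_cv_const]).
  assert (Hcv : Un_cv
                  (fun K => sum_f_R0 (fun w => sum_f_R0 (heat_term t (Z.of_nat w)) K * nu ^ w) W)
                  (sum_f_R0 (fun w => heat_kernel t (Z.of_nat w) * nu ^ w) W)).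
  { induction W as [|W IH]; cbn [sum_f_R0]; [| apply CV_plus]; auto. }
  exact (@Rle_cv_lim _ (fun _ => exp (t / 2 * (nu + / nu - 2))) _ _
           (fun K => sum_heat_term_mul_pow_le t nu K W Ht Hnu) Hcv (Un_cv_const _)).
Qed.

(* With [nu = max 1 mu], every [mu ^ (n + 2)] is at most [nu ^ (x + y + 2 + n)]. *)
Lemma robin_tail_spec (t mu : R) (x y : nat) : 0 < t -> 0 < mu ->
  exists S, infinite_sum (fun n => heat_kernel t (Z.of_nat x + Z.of_nat y + Z.of_nat (n + 2))
                                   * mu ^ (n + 2)) S
    /\ 0 <= S <= exp (t / 2 * (Rmax 1 mu + / Rmax 1 mu - 2)).
Proof.
  intros Ht Hmu; set (nu := Rmax 1 mu).
  assert (Hnu1 : 1 <= nu) by apply Rmax_l.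
  assert (Hnu : mu <= nu) by apply Rmax_r.
  assert (Hp : forall z, 0 <= heat_kernel t z) by (intro; apply (heat_kernel_spec t _ Ht)).
  apply infinite_sum_nonneg_bounded.
  - intro n; apply Rmult_le_pos; [apply Hp | apply pow_le; lra].
  - intro N.
    apply Rle_trans
      with (sum_f_R0 (fun n => heat_kernel t (Z.of_nat (x + y + 2 + n)) * nu ^ (x + y + 2 + n)) N).
    + apply sum_Rle; intros n _.
      replace (Z.of_nat x + Z.of_nat y + Z.of_nat (n + 2))%Z with (Z.of_nat (x + y + 2 + n)) by lia.
      apply Rmult_le_compat_l; [apply Hp |].
      apply Rle_trans with (nu ^ (n + 2)); [apply pow_incr; lra | apply Rle_pow; [lra | lia]].
    + eapply Rle_trans;
        [apply (sum_f_R0_shift_le (fun w => heat_kernel t (Z.of_nat w) * nu ^ w)) |].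
      * intro w; apply Rmult_le_pos; [apply Hp | apply pow_le; lra].
      * apply sum_heat_kernel_mul_pow_le; lra.
Qed.

Lemma Rabs_le_between (a b : R) : Rabs a <= b -> - b <= a <= b.
Proof. unfold Rabs; destruct (Rcase_abs a); intro; lra. Qed.

Lemma Rmax_1_add_inv_sub_2_le (mu : R) : 0 < mu ->
  Rmax 1 mu + / Rmax 1 mu - 2 <= (mu - 1) ^ 2.
Proof.
  intro Hmu; apply Rmax_case_strong; intro Hle.
  - rewrite Rinv_1; nra.
  - replace (mu + / mu - 2) with ((mu - 1) ^ 2 * / mu) by (field; lra).
    rewrite <- (Rmult_1_r ((mu - 1) ^ 2)) at 2.
    apply Rmult_le_compat_l; [apply pow2_ge_0 |].
    rewrite <- Rinv_1; apply Rinv_le_contravar; lra.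
Qed.

Lemma one_sub_inv_sqr_le (d : R) : Rabs d <= 1 / 2 -> 1 - / (1 - d) ^ 2 <= 10 * Rabs d.
Proof.
  intro Hd.
  assert (Hd' : - (1 / 2) <= d <= 1 / 2) by (apply Rabs_le_between, Hd).
  assert (Hm : 1 / 4 <= (1 - d) ^ 2) by nra.
  apply Rmult_le_reg_r with ((1 - d) ^ 2); [lra |].
  replace ((1 - / (1 - d) ^ 2) * (1 - d) ^ 2) with (d ^ 2 - 2 * d) by (field; lra).
  destruct (Rle_or_lt 0 d); [rewrite Rabs_right | rewrite Rabs_left]; nra.
Qed.

Lemma robin_kernel_le (A eps t : R) (x y : nat) : 0 < t -> Rabs (A * eps) <= 1 / 2 ->
  robin_kernel A eps t x y
  <= 25 / 2 / sqrt t + 10 * Rabs (A * eps) * exp (t / 2 * (A * eps) ^ 2).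
Proof.
  intros Ht Hd; unfold robin_kernel, muA; cbv zeta; set (d := A * eps) in *.
  assert (Hd' : - (1 / 2) <= d <= 1 / 2) by (apply Rabs_le_between, Hd).
  destruct (robin_tail_spec t (1 - d) x y Ht ltac:(lra)) as [S [HS [HS0 HS1]]].
  rewrite (series_val_eq _ _ HS).
  destruct (heat_kernel_spec t (Z.of_nat x - Z.of_nat y) Ht) as [_ [H10 H1]].
  destruct (heat_kernel_spec t (Z.of_nat x + Z.of_nat y + 1) Ht) as [_ [H20 H2]].
  set (X := exp (t / 2 * d ^ 2)).
  assert (HSX : S <= X).
  { eapply Rle_trans; [exact HS1 | apply exp_le_compat, Rmult_le_compat_l; [lra |]].
    replace (d ^ 2) with ((1 - d - 1) ^ 2) by ring.
    apply Rmax_1_add_inv_sub_2_le; lra. }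
  pose proof (one_sub_inv_sqr_le d Hd) as Hcoef.
  assert (Htail : (1 - / (1 - d) ^ 2) * S <= 10 * Rabs d * X).
  { assert (0 <= Rabs d) by apply Rabs_pos.
    destruct (Rle_or_lt (1 - / (1 - d) ^ 2) 0); [| apply Rmult_le_compat]; nra. }
  assert (Hmu : (1 - d) * heat_kernel t (Z.of_nat x + Z.of_nat y + 1) <= 3 / 2 * (5 / sqrt t))
    by (apply Rmult_le_compat; lra).
  unfold Rdiv in *; lra.
Qed.

Theorem mainTheorem7 (A : R) :
  exists C K : R, exists eps0 : R, 0 < eps0 /\
    forall eps : R, 0 < eps -> eps < eps0 ->
    forall t : R, 0 < t ->
    forall x y : nat,
      robin_kernel A eps t x y <= C * (/ sqrt t + eps) * exp (K * eps ^ 2 * t).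
Proof.
  pose proof (Rabs_pos A) as HA.
  exists (13 + 10 * Rabs A), (A ^ 2 / 2), (/ (2 * (Rabs A + 1))).
  split; [apply Rinv_0_lt_compat; lra |].
  intros eps He He0 t Ht x y.
  assert (Hd : Rabs (A * eps) <= 1 / 2).
  { rewrite Rabs_mult, (Rabs_right eps) by lra.
    apply (Rmult_lt_compat_l (2 * (Rabs A + 1))) in He0; [| lra].
    rewrite Rinv_r in He0; nra. }
  eapply Rle_trans; [apply robin_kernel_le; assumption |].
  replace (t / 2 * (A * eps) ^ 2) with (A ^ 2 / 2 * eps ^ 2 * t) by field.
  set (X := exp (A ^ 2 / 2 * eps ^ 2 * t)).
  assert (HX : 1 <= X).
  { rewrite <- exp_0; apply exp_le_compat.
    apply Rmult_le_pos; [apply Rmult_le_pos; [nra | apply pow2_ge_0] | lra]. }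
  set (u := / sqrt t).
  assert (Hu : 0 < u) by apply Rinv_0_lt_compat, sqrt_lt_R0, Ht.
  replace (25 / 2 / sqrt t) with (25 / 2 * u) by (unfold u, Rdiv; ring).
  rewrite Rabs_mult, (Rabs_right eps) by lra.
  assert (u <= u * X) by nra.
  assert (0 <= Rabs A * u * X) by (apply Rmult_le_pos; nra).
  assert (0 <= eps * X) by nra.
  nra.
Qed.
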